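(* Let $A$ be a circular $m\times n$ matrix and let $\Gamma$ be a circuit in $D(A)$. Then $(\pi_+-\pi_-)^T\tilde A=p(\Gamma)\mathbf{1}^T$.
   Context: Notation: $[n]=\{1,\dots,n\}$ with addition mod $n$ (index $0$ identified with $n$); for $a,c\in[n]$ with $t\ge0$ minimal such that $a+t\equiv c\pmod n$, $[a,c)_n=\{a,\dots,a+t-1\}$ (mod $n$). An $m\times n$ $\{0,1\}$-matrix $A$ is circular if for each row $i$ there are $\ell_i\in[n]$ and an integer $2\le k_i\le n-1$ with row $i$ the incidence vector of $[\ell_i,\ell_i+k_i)_n$. $\tilde A=\binom{A}{I}\in\{0,1\}^{(m+n)\times n}$ with $I$ the $n\times n$ identity. $D(A)$: node set $[n]$ (labels mod $n$); forward arcs $a_i=(\ell_i-1,\ell_i+k_i-1)$ ($i\in[m]$, length $k_i$) and $a_{m+j}=(j-1,j)$ ($j\in[n]$, length $1$); reverse arcs $\bar a_i=(\ell_i+k_i-1,\ell_i-1)$ (length $-k_i$) and $\bar a_{m+j}=(j,j-1)$ (length $-1$). A circuit is a simple directed circuit; its winding number $p(\Gamma)$ satisfies $p(\Gamma)n=\sum_{a\in E(\Gamma)}l(a)$. $\pi_+\in\{0,1\}^{m+n}$ has $(\pi_+)_k=1$ iff $a_k\in E(\Gamma)$, and $\pi_-\in\{0,1\}^{m+n}$ has $(\pi_-)_k=1$ iff $\bar a_k\in E(\Gamma)$. *)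

From HB Require Import structures.
From mathcomp Require Import all_boot all_order all_algebra.
Set Implicit Arguments. Unset Strict Implicit. Unset Printing Implicit Defensive.
Import Order.TTheory GRing.Theory Num.Theory.
Local Open Scope ring_scope.

(* Conventions: columns of an m x n matrix are 'I_n; the 0-based column j
   corresponds to the paper's column j+1 in [n].  The row parameters
   l i (the paper's l_i, 1-based, in [n]) and k i are naturals.
   Nodes of D(A) are naturals taken modulo n (label x = label x %% n). *)

(* c (1-based, in [n]) lies in the circular interval [l, l+k)_n (l in [n]) *)
Definition in_cint (n l k c : nat) : bool := ((c + n - l) %% n < k)%N.

Definition circular (m n : nat) (A : 'M[int]_(m, n)) (l k : 'I_m -> nat) : Prop :=
  forall i : 'I_m,
    [/\ (1 <= l i <= n)%N, (2 <= k i <= n.-1)%N &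
        forall j : 'I_n, A i j = (in_cint n (l i) (k i) j.+1)%:R].

Definition tildeA (m n : nat) (A : 'M[int]_(m, n)) : 'M[int]_(m + n, n) :=
  col_mx A 1%:M.

(* Arcs of D(A): (x, true) = a_x (forward), (x, false) = \bar a_x (reverse),
   with x : 'I_(m+n); x < m is a row arc, x = m + j' (0-based j') is the arc
   a_{m+j} with j = j'+1. *)
Definition darc (m n : nat) := ('I_(m + n) * bool)%type.

Section DA.
Variables (m n : nat) (l k : 'I_m -> nat).

Definition fwd_tail (x : 'I_(m + n)) : nat :=
  match split x with inl i => (l i).-1 | inr j => nat_of_ord j end.
Definition fwd_head (x : 'I_(m + n)) : nat :=
  match split x with inl i => (l i + k i).-1 | inr j => j.+1 end.
Definition fwd_len (x : 'I_(m + n)) : int :=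
  match split x with inl i => (k i)%:Z | inr j => 1 end.

Definition arc_tail (a : darc m n) : nat :=
  (if a.2 then fwd_tail a.1 else fwd_head a.1) %% n.
Definition arc_head (a : darc m n) : nat :=
  (if a.2 then fwd_head a.1 else fwd_tail a.1) %% n.
Definition arc_len (a : darc m n) : int :=
  if a.2 then fwd_len a.1 else - fwd_len a.1.

Definition is_circuit (c : seq (darc m n)) : Prop :=
  [/\ c != [::],
      cycle (fun a b => arc_head a == arc_tail b) c &
      uniq (map arc_tail c)].

(* winding number: p(Gamma) * n = sum of arc lengths *)
Definition winding (c : seq (darc m n)) : int :=
  ((\sum_(a <- c) arc_len a) %/ (n%:Z))%Z.

Definition pi_plus (c : seq (darc m n)) : 'cV[int]_(m + n) :=
  \col_x (((x, true) \in c) : nat)%:R.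
Definition pi_minus (c : seq (darc m n)) : 'cV[int]_(m + n) :=
  \col_x (((x, false) \in c) : nat)%:R.
End DA.

From mathcomp Require Import all_boot all_algebra.
From mathcomp Require Import zify.
Set Implicit Arguments. Unset Strict Implicit. Unset Printing Implicit Defensive.
Import GRing.Theory.
Local Open Scope ring_scope.

(* Fix a column j of tildeA, i.e. the unit arc (j, j+1) of D(A), and give each
   node t the potential (t - j - 1) mod n, its forward distance from node j+1.
   A forward step raises the potential by 1, except across the cut (j, j+1),
   where it drops by n - 1.  A forward arc a traverses the columns of its
   circular interval, so it crosses the cut exactly when tildeA(a, j) = 1 and
   its potential changes by l(a) - n tildeA(a, j).  Around a circuit the
   potential changes cancel, hence sum_a l(a) = n ((pi_+ - pi_-)^T tildeA)_j. *)

Section CutPotential.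
Variables (n j : nat).
Hypothesis ltjn : (j < n)%N.

Let n_gt0 : (0 < n)%N := leq_ltn_trans (leq0n j) ltjn.

Definition cut_potential (t : nat) : nat := (t + n - j.+1) %% n.

Lemma cut_potential_mod (t : nat) : cut_potential (t %% n) = cut_potential t.
Proof. by rewrite /cut_potential -!addnBA // modnDml. Qed.

Lemma cut_potential_small (r : nat) : (r < n)%N ->
  cut_potential r = if (j < r)%N then (r - j.+1)%N else (r + n - j.+1)%N.
Proof.
move=> ltrn; rewrite /cut_potential; case: ltnP => ltjr.
  by rewrite -addnBAC // modnDr modn_small //; lia.
by rewrite modn_small //; lia.
Qed.

Lemma cut_potential_succ (t : nat) :
  (cut_potential t.+1)%:Z = (cut_potential t)%:Z + 1 - n%:Z * (t %% n == j)%N.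
Proof.
rewrite -cut_potential_mod -[cut_potential t]cut_potential_mod -addn1 -modnDml.
move: (t %% n)%N (ltn_pmod t n_gt0) => r ltrn.
have -> : ((r + 1) %% n = if r + 1 == n then 0 else r + 1)%N.
  by case: eqP => [->|?]; [rewrite modnn | rewrite modn_small //; lia].
rewrite !cut_potential_small //; last by case: eqP; lia.
case: (eqVneq r j) => /= ?; case: eqP => ?; rewrite ?ltn0.
all: by repeat case: ifP => ?; lia.
Qed.

Lemma cut_potential_addn (t L : nat) :
  (cut_potential (t + L))%:Z
  = (cut_potential t)%:Z + L%:Z
    - n%:Z * (count (fun s => s %% n == j)%N (iota t L))%:Z.
Proof.
elim: L => [|L IH]; first by rewrite addn0 /=; lia.
rewrite addnS cut_potential_succ IH -addn1 iotaD count_cat /= addn0.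
lia.
Qed.

Lemma modnD_eq (t L : nat) : (L < n)%N ->
  ((t + L) %% n == j)%N = ((j + n - t %% n) %% n == L)%N.
Proof.
move=> ltLn.
have ltrn : (t %% n < j + n)%N := leq_trans (ltn_pmod t n_gt0) (leq_addl j n).
rewrite -{1}(modn_small ltjn) -(modnDr j) -modnDml.
by rewrite -{1}[(j + n)%N](subnK (ltnW ltrn)) addnC eqn_modDr modn_small // eq_sym.
Qed.

Lemma count_iota_modn (t L : nat) : (L <= n)%N ->
  count (fun s => s %% n == j)%N (iota t L) = ((j + n - t %% n) %% n < L)%N.
Proof.
elim: L => [|L IH] ltLn; first by rewrite ltn0.
rewrite -addn1 iotaD count_cat IH ?(ltnW ltLn) //= modnD_eq // addn0.
lia.
Qed.

End CutPotential.

Section ArcPotential.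
Variables (m n : nat) (A : 'M[int]_(m, n)) (l k : 'I_m -> nat).
Hypothesis hA : circular A l k.
Variable j : 'I_n.

Local Notation pot := (cut_potential n j).

Lemma fwd_arc_potential (x : 'I_(m + n)) :
  (pot (fwd_head l k x %% n))%:Z - (pot (fwd_tail l x %% n))%:Z
  = fwd_len k x - n%:Z * tildeA A x j.
Proof.
rewrite !cut_potential_mod // /fwd_head /fwd_tail /fwd_len /tildeA.
rewrite -(splitK x); case: (split x) => [i|j']; rewrite unsplitK.
  have [/andP[l_ge1 l_le_n] /andP[k_ge2 k_le_n] A_i] := hA i.
  have -> : ((l i + k i).-1 = (l i).-1 + k i)%N by lia.
  rewrite col_mxEu A_i cut_potential_addn // count_iota_modn //; last lia.
  rewrite (@modn_small (l i).-1); last lia.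
  rewrite /in_cint natz; have -> : (j + n - (l i).-1 = j.+1 + n - l i)%N by lia.
  lia.
rewrite /= col_mxEd mxE -addn1 cut_potential_addn //= addn0 modn_small //.
rewrite natz; case: (eqVneq j' j) => [->|]; first by rewrite eqxx; lia.
by rewrite -val_eqE /= => /negbTE ->; lia.
Qed.

Lemma arc_potential (a : darc m n) :
  (pot (arc_head l k a))%:Z - (pot (arc_tail l k a))%:Z
  = arc_len k a - n%:Z * ((-1) ^+ (~~ a.2) * tildeA A a.1 j).
Proof.
case: a => x [|]; rewrite /arc_head /arc_tail /arc_len /=.
  by rewrite fwd_arc_potential mul1r.
by rewrite -opprB fwd_arc_potential expr1 mulN1r mulrN opprB opprK addrC.
Qed.

End ArcPotential.

Lemma path_sum_diff (T : Type) (U : eqType) (V : zmodType) (h t : T -> U)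
    (g : U -> V) (x : T) (s : seq T) :
  path (fun a b => h a == t b) x s ->
  \sum_(a <- x :: s) (g (h a) - g (t a)) = g (h (last x s)) - g (t x).
Proof.
elim: s x => [|y s IH] x /=; first by rewrite big_seq1.
by case/andP=> /eqP hxy /IH; rewrite big_cons => ->; rewrite hxy addrC addrA subrK.
Qed.

Lemma cycle_sum_diff (T : Type) (U : eqType) (V : zmodType) (h t : T -> U)
    (g : U -> V) (c : seq T) :
  cycle (fun a b => h a == t b) c -> \sum_(a <- c) (g (h a) - g (t a)) = 0.
Proof.
case: c => [|x s]; first by rewrite big_nil.
rewrite /= rcons_path => /andP[path_s /eqP last_x].
by rewrite path_sum_diff // last_x subrr.
Qed.

Lemma pi_diff_mulmx (m n p : nat) (c : seq (darc m n)) (T : 'M[int]_(m + n, p))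
    (i : 'I_1) (j : 'I_p) : uniq c ->
  ((pi_plus c - pi_minus c)^T *m T) i j = \sum_(a <- c) (-1) ^+ (~~ a.2) * T a.1 j.
Proof.
move=> uniq_c; rewrite mxE (big_uniq _ uniq_c) [RHS]big_mkcond /=.
rewrite [RHS](_ : _ = \sum_x \sum_(b : bool)
    (if (x, b) \in c then (-1) ^+ (~~ b) * T x j else 0)); last first.
  by rewrite pair_big; apply: eq_big => // -[].
apply: eq_bigr => x _; rewrite big_bool !mxE.
by case: ((x, true) \in c); case: ((x, false) \in c); rewrite /= ?expr1; lia.
Qed.

Theorem corollary4p2 (m n : nat) (A : 'M[int]_(m, n)) (l k : 'I_m -> nat)
  (hA : circular A l k) (c : seq (darc m n)) (hc : is_circuit l k c) :
  (pi_plus c - pi_minus c)^T *m tildeA A = const_mx (winding k c).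
Proof.
apply/matrixP => i j; have [_ cycle_c uniq_tails] := hc.
rewrite [RHS]mxE /winding pi_diff_mulmx ?(map_uniq uniq_tails) //.
have := cycle_sum_diff (fun t => (cut_potential n j t)%:Z) cycle_c.
under eq_bigr do rewrite (arc_potential hA).
rewrite sumrB -mulr_sumr => /eqP; rewrite subr_eq0 => /eqP ->.
by rewrite mulKz // eqz_nat -lt0n (leq_ltn_trans _ (ltn_ord j)).
Qed.
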